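(* Let $k\ge 1$ and $s\ge 2$ be integers, let $a_s>a_{s-1}>\dots>a_1\ge 1$ be integers, and let $m_1,\dots,m_s\ge 1$ be integers with $m_1+\dots+m_s=k$ and $m_s=2h+1$ for some integer $h\ge 0$. Let $b$ be the multiset consisting of $m_i$ copies of $a_i$ for $i=1,\dots,s$. Suppose $a_s>\sum_{i=1}^{s-1}m_ia_i$. Consider the quadratic form $$q(x)=\frac{1}{2}\sum_{i=1}^k\sum_{j=1}^k|i-j|\,x_ix_j$$ over all vectors $x=(x_1,\dots,x_k)$ whose entries are a rearrangement of the multiset $b$. Then, up to reversal of the order of entries (which leaves $q$ unchanged), $q$ is uniquely maximized by $$x=(\underbrace{a_s,\dots,a_s}_{h+1},\underbrace{a_1,\dots,a_1}_{m_1},\underbrace{a_2,\dots,a_2}_{m_2},\dots,\underbrace{a_{s-1},\dots,a_{s-1}}_{m_{s-1}},\underbrace{a_s,\dots,a_s}_{h}),$$ i.e. $h+1$ copies of $a_s$, followed by all remaining entries of $b$ other than $a_s$ in nondecreasing order, followed by $h$ copies of $a_s$.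
   Context: Motivation: for a caterpillar tree $T$ of order $n$ whose non-leaf vertices $v_1,\dots,v_k$ lie in this order along the spine, the Wiener index (sum of distances over all unordered vertex pairs) equals $W(T)=(n-1)^2+q(x)$ with $x_i=\deg(v_i)-1$; the multiset $b$ plays the role of the decremented degree sequence (non-leaf degrees minus one). *)

From mathcomp Require Import all_boot.
Set Implicit Arguments. Unset Strict Implicit. Unset Printing Implicit Defensive.

Definition distn (i j : nat) : nat := (i - j) + (j - i).

(* q(x) = 1/2 * sum_i sum_j |i-j| x_i x_j  (the double sum is even, so the
   nat division by 2 is exact). Indices are 0-based; |i-j| is shift invariant. *)
Definition qform (x : seq nat) : nat :=
  (\sum_(i < size x) \sum_(j < size x) distn i j * nth 0 x i * nth 0 x j) %/ 2.

(* the multiset b: m_i copies of a_i, i = 1..s, as a sequence (up to perm_eq) *)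
Definition bmultiset (s : nat) (a m : nat -> nat) : seq nat :=
  flatten [seq nseq (m i) (a i) | i <- iota 1 s].

Definition xstar (s h : nat) (a m : nat -> nat) : seq nat :=
  nseq h.+1 (a s) ++ flatten [seq nseq (m i) (a i) | i <- iota 1 s.-1]
    ++ nseq h (a s).

From mathcomp Require Import all_boot zify.
From Stdlib Require Import Classical.
Set Implicit Arguments. Unset Strict Implicit. Unset Printing Implicit Defensive.

(* Proof strategy.
   1. A recursion for q: writing M(x) = sum_j (j+1) x_j for the first moment,
      q(y :: x) = q(x) + y * M(x).  Hence q is invariant under reversal, and
      exchanging two adjacent entries u, v of pre ++ u :: v :: suf changes q
      by (v - u) * (sum pre - sum suf) (lemma qform_swap).
   2. Call an arrangement swap-stable when no adjacent exchange increases q.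
      Since q is bounded on the (finite) set of rearrangements of b, a
      hill-climbing argument shows that every rearrangement is dominated by a
      swap-stable one, strictly unless it is itself swap-stable.
   3. Write A = a_s and let F be the remaining entries in nondecreasing order,
      so that every entry of F lies in (0, A) and sum F < A.  Induction on h
      shows that the swap-stable rearrangements of F ++ (2h+1 copies of A)
      are exactly the claimed maximizer and its reversal: an A must sit at
      both ends (otherwise the 2h copies of A after the first one outweigh
      everything before it), and for h = 0 the entries after the lone A must
      be sorted. *)

Definition dsum (x : seq nat) : nat :=
  \sum_(i < size x) \sum_(j < size x) distn i j * nth 0 x i * nth 0 x j.

Definition moment (x : seq nat) : nat := \sum_(j < size x) j.+1 * nth 0 x j.

Lemma sumn_ord (x : seq nat) : sumn x = \sum_(j < size x) nth 0 x j.
Proof.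
elim: x => [|y x IH] /=; first by rewrite big_ord0.
by rewrite big_ord_recl /= IH.
Qed.

Lemma moment_cons y x : moment (y :: x) = y + moment x + sumn x.
Proof.
rewrite /moment big_ord_recl /= mul1n sumn_ord -addnA -big_split /=.
by congr (_ + _); apply: eq_bigr => i _; rewrite /bump /= add0n mulSn addnC.
Qed.

Lemma big_ord_recl2 n (F : nat -> nat -> nat) :
  \sum_(i < n.+1) \sum_(j < n.+1) F i j =
  F 0 0 + \sum_(j < n) F 0 j.+1 + \sum_(i < n) F i.+1 0
  + \sum_(i < n) \sum_(j < n) F i.+1 j.+1.
Proof.
rewrite big_ord_recl big_ord_recl /= -!addnA; congr (_ + (_ + _)).
by rewrite -big_split /=; apply: eq_bigr => i _; rewrite big_ord_recl.
Qed.

(* The entry y in front interacts with x_j at distance j+1. *)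
Lemma dsum_cons y x : dsum (y :: x) = dsum x + (y * moment x).*2.
Proof.
rewrite /dsum /=.
rewrite (big_ord_recl2 _ (fun i j => distn i j * nth 0 (y :: x) i * nth 0 (y :: x) j)) /=.
rewrite /moment big_distrr /=.
have first_row : \sum_(j < size x) distn 0 j.+1 * y * nth 0 x j
    = \sum_(j < size x) y * (j.+1 * nth 0 x j).
  by apply: eq_bigr => j _; rewrite /distn; lia.
have first_col : \sum_(i < size x) distn i.+1 0 * nth 0 x i * y
    = \sum_(j < size x) y * (j.+1 * nth 0 x j).
  by apply: eq_bigr => i _; rewrite /distn; lia.
have shift : \sum_(i < size x) \sum_(j < size x) distn i.+1 j.+1 * nth 0 x i * nth 0 x j
    = \sum_(i < size x) \sum_(j < size x) distn i j * nth 0 x i * nth 0 x j.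
  by apply: eq_bigr => i _; apply: eq_bigr => j _; rewrite /distn !subSS.
rewrite first_row first_col shift -/(dsum x) [distn 0 0]/distn.
by rewrite subnn !mul0n add0n addnC -addnn.
Qed.

Lemma dsum_qform x : dsum x = (qform x).*2.
Proof.
elim: x => [|y x IH]; first by rewrite /qform /dsum big_ord0.
rewrite /qform -/(dsum (y :: x)) dsum_cons IH -doubleD.
by rewrite divn2 doubleK.
Qed.

Lemma qform_cons y x : qform (y :: x) = qform x + y * moment x.
Proof. by apply: double_inj; rewrite -dsum_qform dsum_cons dsum_qform doubleD. Qed.

(* Reversal preserves all distances |i - j|. *)
Lemma qform_rev x : qform (rev x) = qform x.
Proof.
rewrite /qform /dsum size_rev (reindex_inj rev_ord_inj) /=.
congr (_ %/ 2); apply: eq_bigr => i _; rewrite (reindex_inj rev_ord_inj) /=.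
apply: eq_bigr => j _; have [lti ltj] := (ltn_ord i, ltn_ord j).
have rev_rev (k : nat) : k < size x -> size x - (size x - k.+1).+1 = k by lia.
rewrite !nth_rev ?rev_rev //; try lia.
by congr (_ * _ * _); rewrite /distn; lia.
Qed.

Lemma moment_swap pre u v suf :
  moment (pre ++ v :: u :: suf) + v = moment (pre ++ u :: v :: suf) + u.
Proof.
elim: pre => [|y pre IH] /=; first by rewrite !moment_cons /=; lia.
by rewrite !moment_cons !sumn_cat /=; lia.
Qed.

(* Effect of an adjacent exchange on q: the gain of moving v before u is
   (v - u) * (sum pre - sum suf). *)
Lemma qform_swap pre u v suf :
  qform (pre ++ v :: u :: suf) + v * sumn pre + u * sumn suf =
  qform (pre ++ u :: v :: suf) + u * sumn pre + v * sumn suf.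
Proof.
elim: pre => [|y pre IH] /=; first by rewrite !qform_cons !moment_cons /=; lia.
have := congr1 (muln y) (moment_swap pre u v suf); rewrite !mulnDr.
by rewrite !qform_cons; lia.
Qed.

(* A crude bound, making q bounded on the rearrangements of a multiset. *)
Lemma qform_bound x : qform x <= size x * (sumn x * sumn x).
Proof.
have moment_bound (z : seq nat) : moment z <= size z * sumn z.
  by elim: z => [|y z IH]; rewrite ?moment_cons /= ?[moment _]big_ord0; nia.
elim: x => [|y x IH]; first by rewrite /qform /dsum big_ord0.
rewrite qform_cons /=; have := moment_bound x; nia.
Qed.

(* No adjacent exchange increases q (compare with qform_swap). *)
Definition swap_stable (x : seq nat) : Prop :=
  forall pre u v suf, x = pre ++ u :: v :: suf ->
  u * sumn pre + v * sumn suf <= v * sumn pre + u * sumn suf.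

Lemma swap_improves x : ~ swap_stable x -> exists2 y, perm_eq y x & qform x < qform y.
Proof.
move=> unstable; apply: NNPP => no_better; apply: unstable => pre u v suf def_x.
rewrite leqNgt; apply/negP => gain; apply: no_better.
exists (pre ++ v :: u :: suf).
  rewrite def_x perm_cat2l -[v :: u :: suf]/([:: v; u] ++ suf).
  by rewrite -[u :: v :: suf]/([:: u; v] ++ suf) perm_cat2r (perm_catC [:: v]).
by have := qform_swap pre u v suf; rewrite -def_x; lia.
Qed.

Lemma swap_stable_pair x pre u v suf : swap_stable x -> x = pre ++ u :: v :: suf ->
  (u < v -> sumn suf <= sumn pre) /\ (v < u -> sumn pre <= sumn suf).
Proof. by move=> stable /stable; split => ?; nia. Qed.

Lemma swap_stable_rev x : swap_stable x -> swap_stable (rev x).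
Proof.
move=> stable pre u v suf def_x.
have : x = rev suf ++ v :: u :: rev pre.
  by rewrite -[x]revK def_x rev_cat !rev_cons -!cats1 -!catA.
by move/stable; rewrite !sumn_rev; lia.
Qed.

Lemma swap_stable_inner (A : nat) x : swap_stable (A :: rcons x A) -> swap_stable x.
Proof.
move=> stable pre u v suf def_x.
have : A :: rcons x A = (A :: pre) ++ u :: v :: rcons suf A by rewrite def_x rcons_cat.
by move/stable; rewrite /= -cats1 sumn_cat /= !mulnDr; lia.
Qed.

Lemma hill_climb (T : Type) (P L : T -> Prop) (f : T -> nat) (B : nat) :
  (forall x, P x -> f x <= B) ->
  (forall x, P x -> ~ L x -> exists2 y, P y & f x < f y) ->
  forall x, P x -> exists y, [/\ P y, L y, f x <= f y & L x \/ f x < f y].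
Proof.
move=> bounded improve x Px; move: {2}(B - f x).+1 (ltnSn (B - f x)) => n.
elim: n x Px => [|n IH] x Px // gap.
have [Lx|notLx] := classic (L x); first by exists x; split; last left.
have [y Py lt_xy] := improve x Px notLx.
have [z [Pz Lz le_yz _]] := IH y Py ltac:(have := bounded y Py; lia).
by exists z; split => //; [lia | right; lia].
Qed.

Lemma split_first (T : eqType) (A : T) x :
  A \in x -> exists y z, x = y ++ A :: z /\ A \notin y.
Proof.
elim: x => [|w x IH] //; rewrite in_cons; have [<- _|neq /IH] := eqVneq A w.
  by exists [::], x.
move=> [y [z [-> Ay]]]; exists (w :: y), z; split => //.
by rewrite in_cons negb_or neq.
Qed.

Lemma sorted_from_adjacent (T : Type) (r : rel T) (z : seq T) :
  (forall p u v s, z = p ++ u :: v :: s -> r u v) -> sorted r z.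
Proof.
elim: z => [|u [|v s] IH] // adj /=; apply/andP; split; first exact: (adj [::]).
by apply: IH => p u' v' s' def_z; apply: (adj (u :: p)); rewrite def_z.
Qed.

Lemma count_mem_sumn (A : nat) (z : seq nat) : count_mem A z * A <= sumn z.
Proof.
elim: z => [|w z IH] //=; rewrite mulnDl; case: eqVneq => [->|_] /=.
  by rewrite mul1n leq_add2l.
by rewrite mul0n add0n (leq_trans IH) ?leq_addl.
Qed.

Section ExtremeArrangements.
Variables (A : nat) (F : seq nat).
Hypothesis F_range : all (fun z => 0 < z < A) F.
Hypothesis F_light : sumn F < A.
Hypothesis F_sorted : sorted leq F.

Definition bseq (h : nat) : seq nat := F ++ nseq h.*2.+1 A.

Definition xopt (h : nat) : seq nat := nseq h.+1 A ++ F ++ nseq h A.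

Lemma A_notin_F : A \notin F.
Proof. by apply/negP => /(allP F_range) /=; rewrite ltnn andbF. Qed.

Lemma count_A h x : perm_eq x (bseq h) -> count_mem A x = h.*2.+1.
Proof.
move/permP => ->; rewrite count_cat count_nseq /= eqxx mul1n.
by move/count_memPn: A_notin_F => ->.
Qed.

Lemma small_entry h x z : perm_eq x (bseq h) -> z \in x -> z != A -> 0 < z < A.
Proof.
move=> xP; rewrite (perm_mem xP) mem_cat => /orP [/(allP F_range) //|].
by move/nseqP => [-> _]; rewrite eqxx.
Qed.

Lemma split_first_A h x : perm_eq x (bseq h) -> exists y z, x = y ++ A :: z /\ A \notin y.
Proof. by move=> xP; apply: split_first; rewrite -has_pred1 has_count (count_A xP). Qed.

Lemma A_free_prefix_sum h y w :
  perm_eq (y ++ w) (bseq h) -> A \notin y -> sumn y <= sumn F.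
Proof.
move=> P Ay.
have A_free (z : seq nat) : A \notin z -> [seq t <- z | t != A] = z.
  move=> Az; apply/all_filterP/allP => t tz; apply: contraNneq Az => <-.
  by rewrite tz.
move/(perm_filter (predC1 A)): P; rewrite !filter_cat filter_nseq /= eqxx cats0.
rewrite (A_free F) ?A_notin_F // (A_free y) // => /perm_sumn.
by rewrite sumn_cat => <-; rewrite leq_addr.
Qed.

(* For h > 0 a swap-stable rearrangement begins with A: otherwise the
   entry u before the first A could move past it, since the 2h copies of A
   behind it outweigh everything in front of it. *)
Lemma stable_starts_with_A h x : 0 < h -> perm_eq x (bseq h) -> swap_stable x ->
  exists x1, x = A :: x1.
Proof.
move=> h_gt0 xP stable.
have [y [z [def_x Ay]]] := split_first_A xP.
case/lastP: y def_x Ay => [|pre u] def_x Ay; first by exists z.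
have uA : u != A by apply: contraNneq Ay => <-; rewrite mem_rcons mem_head.
have /andP [_ u_lt] : 0 < u < A.
  by apply: (small_entry xP) uA; rewrite def_x mem_cat mem_rcons mem_head.
have prefix_light : sumn (rcons pre u) <= sumn F.
  by apply: (A_free_prefix_sum (w := A :: z) (h := h)); rewrite -?def_x.
have count_z : count_mem A z = h.*2.
  by move: (count_A xP); rewrite def_x count_cat (count_memPn Ay) /= eqxx => -[].
have suffix_heavy := count_mem_sumn A z; rewrite count_z in suffix_heavy.
have A_le : A <= h.*2 * A by rewrite leq_pmull // double_gt0.
rewrite cat_rcons in def_x.
have [balance _] := swap_stable_pair stable def_x.
by move: (balance u_lt) prefix_light; rewrite sumn_rcons; lia.
Qed.

(* For h = 0, once the lone A is in front, the rest must be sorted: an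
   inversion v < u could be undone, since A outweighs the suffix. *)
Lemma stable_one_A z : perm_eq (A :: z) (bseq 0) -> swap_stable (A :: z) -> z = F.
Proof.
move=> zP stable.
have z_perm : perm_eq z F.
  by move: zP; rewrite /bseq /= cats1 perm_sym perm_rcons perm_cons perm_sym.
apply: (sorted_eq leq_trans anti_leq _ F_sorted z_perm).
apply: sorted_from_adjacent => p u v s def_z; rewrite leqNgt; apply/negP => vu.
have [_ balance] := swap_stable_pair (pre := A :: p) stable (congr1 (cons A) def_z).
have : sumn s <= sumn F by rewrite -(perm_sumn z_perm) def_z sumn_cat /=; lia.
by move: (balance vu) => /=; lia.
Qed.

(* For h = 0 the lone A sits at one end: two neighbours v1, v2 of it
   would give sum pre >= v2 + sum suf and sum suf >= sum pre + v1. *)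
Lemma stable_arrangements0 x : perm_eq x (bseq 0) -> swap_stable x ->
  x = xopt 0 \/ x = rev (xopt 0).
Proof.
move=> xP stable.
have [y [z [def_x Ay]]] := split_first_A xP.
have Az : A \notin z.
  apply/count_memPn; move: (count_A xP).
  by rewrite def_x count_cat (count_memPn Ay) /= eqxx => -[].
case/lastP: y def_x Ay => [|pre v1] def_x Ay.
  rewrite /= in def_x; subst x.
  by left; rewrite (stable_one_A xP stable) /xopt /= cats0.
case: z def_x Az => [|v2 suf] def_x Az.
  have def_rx : rev x = A :: rev (rcons pre v1) by rewrite def_x rev_cat.
  have rxP : perm_eq (rev x) (bseq 0) by rewrite perm_rev.
  have rstable := swap_stable_rev stable.
  rewrite def_rx in rxP rstable.
  by right; rewrite -[x]revK def_rx (stable_one_A rxP rstable) /xopt /= cats0.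
have v1A : v1 != A by apply: contraNneq Ay => <-; rewrite mem_rcons mem_head.
have v2A : v2 != A by apply: contraNneq Az => <-; rewrite mem_head.
have /andP [v1_pos v1_lt] : 0 < v1 < A.
  by apply: (small_entry xP) v1A; rewrite def_x mem_cat mem_rcons mem_head.
have /andP [v2_pos v2_lt] : 0 < v2 < A.
  by apply: (small_entry xP) v2A; rewrite def_x mem_cat !in_cons eqxx !orbT.
have [left_balance _] := swap_stable_pair stable (etrans def_x (cat_rcons _ _ _)).
have [_ right_balance] := swap_stable_pair stable def_x.
by move: (left_balance v1_lt) (right_balance v2_lt); rewrite sumn_rcons /=; lia.
Qed.

(* The swap-stable rearrangements are exactly xopt h and its reversal:
   strip an A from each end and induct on h. *)
Lemma stable_arrangements h x : perm_eq x (bseq h) -> swap_stable x ->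
  x = xopt h \/ x = rev (xopt h).
Proof.
elim: h x => [|h IH] x xP stable; first exact: stable_arrangements0.
have [x1 def_x] := stable_starts_with_A (ltn0Sn h) xP stable.
have rxP : perm_eq (rev x) (bseq h.+1) by rewrite perm_rev.
have [w def_rx] := stable_starts_with_A (ltn0Sn h) rxP (swap_stable_rev stable).
case/lastP: x1 def_x => [|x' l] def_x.
  by move: (count_A xP); rewrite def_x /= eqxx.
have {l def_rx} def_x : x = A :: rcons x' A.
  by move: def_rx; rewrite def_x rev_cons rev_rcons => -[-> _].
have x'P : perm_eq x' (bseq h).
  rewrite -(perm_cons A) -(perm_cons A).
  apply: perm_trans (perm_trans xP _); first by rewrite def_x perm_cons perm_sym perm_rcons.
  by rewrite /bseq doubleS (perm_catCA F [:: A; A]).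
have nseqSr n : rcons (nseq n A) A = nseq n.+1 A by elim: n => //= n ->.
have x'stable : swap_stable x' by apply: (swap_stable_inner (A := A)); rewrite -def_x.
rewrite def_x; case: (IH x' x'P x'stable) => ->; [left | right].
  by rewrite /xopt !rcons_cat nseqSr.
by rewrite /xopt !rev_cat !rev_nseq !rcons_cat nseqSr.
Qed.

Lemma xopt_perm h : perm_eq (xopt h) (bseq h).
Proof. by rewrite /xopt /bseq perm_catCA perm_cat2l -nseqD addSn addnn. Qed.

Lemma xopt_maximal h x : perm_eq x (bseq h) ->
  qform x <= qform (xopt h) /\
  (qform x = qform (xopt h) -> x = xopt h \/ x = rev (xopt h)).
Proof.
set b := bseq h => xP.
have bounded y : perm_eq y b -> qform y <= size b * (sumn b * sumn b).
  by move=> yP; rewrite -(perm_size yP) -(perm_sumn yP) qform_bound.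
have improve y : perm_eq y b -> ~ swap_stable y -> exists2 z, perm_eq z b & qform y < qform z.
  by move=> yP /swap_improves [z zy lt_yz]; exists z => //; apply: perm_trans zy yP.
have [y [yP ystable le_xy x_stable_or_worse]] := hill_climb bounded improve xP.
have qy : qform y = qform (xopt h).
  by case: (stable_arrangements yP ystable) => ->; rewrite ?qform_rev.
rewrite -qy; split => // eq_xy; case: x_stable_or_worse => [xstable|]; last lia.
exact: stable_arrangements xP xstable.
Qed.

End ExtremeArrangements.

Definition blocks (a m : nat -> nat) (n : nat) : seq nat :=
  flatten [seq nseq (m i) (a i) | i <- iota 1 n].

Lemma blocks_rcons a m n : blocks a m n.+1 = blocks a m n ++ nseq (m n.+1) (a n.+1).
Proof. by rewrite /blocks -[n.+1]addn1 iotaD map_cat flatten_cat /= cats0 add1n addn1. Qed.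

Lemma blocks_sum a m n : sumn (blocks a m n) = \sum_(1 <= i < n.+1) m i * a i.
Proof.
elim: n => [|n IH]; first by rewrite big_geq.
by rewrite blocks_rcons sumn_cat IH sumn_nseq [RHS]big_nat_recr //= mulnC.
Qed.

Lemma blocks_mem a m n z : z \in blocks a m n -> exists2 i, 1 <= i <= n & z = a i.
Proof.
move/flatten_mapP => [i]; rewrite mem_iota add1n ltnS => i_range /nseqP [-> _].
by exists i.
Qed.

Lemma blocks_sorted a m n :
  (forall i j, 1 <= i -> i < j -> j <= n -> a i <= a j) -> sorted leq (blocks a m n).
Proof.
elim: n => [|n IH] a_mono //.
have nseq_pairwise k v : pairwise leq (nseq k v).
  by elim: k => //= k ->; rewrite andbT; apply/allP => y /nseqP [-> _].
rewrite blocks_rcons sorted_pairwise; last exact: leq_trans.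
rewrite pairwise_cat -sorted_pairwise; last exact: leq_trans.
rewrite IH => [|i j *]; last by apply: a_mono; lia.
rewrite nseq_pairwise !andbT; apply/allrelP => y z /blocks_mem [i i_range ->].
by move/nseqP => [-> _]; apply: a_mono; lia.
Qed.

Lemma increasing_lt (a : nat -> nat) n :
  (forall i, 1 <= i < n -> a i < a i.+1) ->
  forall i j, 1 <= i -> i < j -> j <= n -> a i < a j.
Proof.
move=> a_step i j i1 ij jn; pose D := [pred k | 1 <= k <= n].
have D_convex : {in D &, forall i j k, i < k < j -> k \in D}.
  by move=> i' j' + + k; rewrite !inE; lia.
have D_step : {in D, forall i, i.+1 \in D -> a i < a i.+1}.
  by move=> i'; rewrite !inE => /andP [i'1 _] /andP [_ i'n]; apply: a_step; rewrite i'1.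
by apply: (homo_ltn_in ltn_trans D_convex D_step); rewrite ?inE; lia.
Qed.

(* Theorem 3.1: with A = a s and F = blocks a m s.-1 the hypotheses of
   the section hold, b = bseq h and xstar = xopt h. *)
Theorem theorem3p1 (k s h : nat) (a m : nat -> nat) :
  1 <= k -> 2 <= s ->
  1 <= a 1 ->
  (forall i, 1 <= i < s -> a i < a i.+1) ->
  (forall i, 1 <= i <= s -> 1 <= m i) ->
  \sum_(1 <= i < s.+1) m i = k ->
  m s = h.*2.+1 ->
  \sum_(1 <= i < s) m i * a i < a s ->
  perm_eq (xstar s h a m) (bmultiset s a m) /\
  (forall x : seq nat, perm_eq x (bmultiset s a m) ->
     qform x <= qform (xstar s h a m) /\
     (qform x = qform (xstar s h a m) ->
        x = xstar s h a m \/ x = rev (xstar s h a m))).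
Proof.
move=> _ s_ge2 a1_pos a_step _ _ m_s light.
have a_lt := increasing_lt a_step.
have s_pred : s = s.-1.+1 by lia.
set F := blocks a m s.-1.
have def_b : bmultiset s a m = bseq (a s) F h.
  by rewrite /bseq -m_s -[bmultiset s a m]/(blocks a m s) {1}s_pred blocks_rcons -s_pred.
have F_range : all (fun z => 0 < z < a s) F.
  apply/allP => z /blocks_mem [i i_range ->]; rewrite a_lt ?andbT; try lia.
  have [-> //|i_neq1] := eqVneq i 1.
  by apply: leq_trans a1_pos (ltnW (a_lt 1 i _ _ _)); lia.
have F_light : sumn F < a s by rewrite blocks_sum -s_pred.
have F_sorted : sorted leq F.
  by apply: blocks_sorted => i j *; apply/ltnW/a_lt; lia.
rewrite def_b; split; first exact: xopt_perm.
exact: (xopt_maximal F_range F_light F_sorted).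
Qed.
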